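(* Let $(t_1,s_1),(t_2,s_2)\in\mathbb{C}^\times\times\mathbb{C}^\times$ with $t_1\ne t_2$ and $s_1\neq s_2$, let $X_1=A_2(t_1,s_1)$, $X_2=A_2(t_2,s_2)$, let $\varepsilon_0=\det(X_1)+\det(X_2)-\det(X_1+X_2)$, and for $k\in\mathbb{N}$ let $\mathfrak{X}_k=(X_1X_2)^k+(X_2X_1)^k$. Then $\mathfrak{X}_1=\varepsilon_0 I_2$, $\mathfrak{X}_2=(\varepsilon_0^2-2)I_2$, and $\mathfrak{X}_n=\varepsilon_0\mathfrak{X}_{n-1}-\mathfrak{X}_{n-2}$ for all $n\ge3$.
   Context: $\mathbb{C}^\times=\mathbb{C}\setminus\{0\}$; $A_2(t,s)=\begin{pmatrix} t & s\\ \frac{1-t^2}{s} & -t\end{pmatrix}$; $I_2$ is the $2\times 2$ identity matrix. *)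

From mathcomp Require Import all_boot all_order all_algebra.
From mathcomp Require Import complex.
From mathcomp Require Import reals.
Set Implicit Arguments. Unset Strict Implicit. Unset Printing Implicit Defensive.
Import GRing.Theory Num.Theory.
Local Open Scope ring_scope.
Local Open Scope complex_scope.

Definition A2 (R : realType) (t s : R[i]) : 'M[R[i]]_2 :=
  \matrix_(i < 2, j < 2)
    (if (i == 0 :> nat) && (j == 0 :> nat) then t
     else if (i == 0 :> nat) then s
     else if (j == 0 :> nat) then (1 - t ^+ 2) / s
     else - t).

Definition eps0 (R : realType) (X1 X2 : 'M[R[i]]_2) : R[i] :=
  \det X1 + \det X2 - \det (X1 + X2).

Definition frakX (R : realType) (X1 X2 : 'M[R[i]]_2) (k : nat) : 'M[R[i]]_2 :=
  (X1 *m X2) ^+ k + (X2 *m X1) ^+ k.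

(* [A2 t s] is a traceless 2x2 matrix of determinant [-1], hence an involution by
   Cayley-Hamilton, and the anticommutator of two traceless 2x2 matrices is the
   scalar [eps0].  So [P = X1 X2] and [Q = X2 X1] are mutually inverse with
   [P + Q = eps0], and [P^k + Q^k] obeys the Chebyshev-type recurrence
   [P^(n+2) + Q^(n+2) = (P + Q)(P^(n+1) + Q^(n+1)) - (P^n + Q^n)]. *)

From mathcomp Require Import all_boot all_order all_algebra.
From mathcomp Require Import complex reals ring.
Set Implicit Arguments. Unset Strict Implicit. Unset Printing Implicit Defensive.
Import GRing.Theory Num.Theory.
Local Open Scope ring_scope.
Local Open Scope complex_scope.

Lemma det_mx2 (R : comNzRingType) (A : 'M[R]_2) :
  \det A = A 0 0 * A 1 1 - A 0 1 * A 1 0.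
Proof.
rewrite (expand_det_row _ 0) !big_ord_recl big_ord0 /cofactor !det_mx11 !mxE /=.
rewrite /bump /= expr0 expr1 mul1r mulN1r addr0 mulrN.
by congr (_ * A _ _ - _ * A _ _); try congr (A _ _); apply/eqP.
Qed.

Lemma tr_mx2 (R : comNzRingType) (A : 'M[R]_2) : \tr A = A 0 0 + A 1 1.
Proof.
by rewrite /mxtrace !big_ord_recl big_ord0 addr0; congr (_ + A _ _); apply/eqP.
Qed.

Lemma ord2P (k : 'I_2) : k = 0 \/ k = 1.
Proof. by case: k => [[|[|//]] ?]; [left | right]; apply/val_inj. Qed.

Lemma traceless_mx2_sqr (R : comNzRingType) (A : 'M[R]_2) :
  \tr A = 0 -> A *m A = (- \det A)%:M.
Proof.
rewrite tr_mx2 det_mx2 => /eqP; rewrite addr_eq0 => /eqP A00.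
apply/matrixP => i j; rewrite !mxE !big_ord_recl big_ord0 addr0.
have -> : lift ord0 ord0 = 1 :> 'I_2 by apply/val_inj.
by case: (ord2P i) => ->; case: (ord2P j) => ->; rewrite /= ?A00; ring.
Qed.

Lemma traceless_mx2_anticomm (R : comNzRingType) (A B : 'M[R]_2) :
  \tr A = 0 -> \tr B = 0 ->
  A *m B + B *m A = (\det A + \det B - \det (A + B))%:M.
Proof.
move=> trA trB; have trAB : \tr (A + B) = 0 by rewrite mxtraceD trA trB addr0.
have -> : \det A + \det B - \det (A + B)
          = - \det (A + B) - - \det A - - \det B by ring.
rewrite !raddfB /= -traceless_mx2_sqr // -(traceless_mx2_sqr trA).
rewrite -(traceless_mx2_sqr trB) mulmxDl !mulmxDr.
by apply/eqP; rewrite eq_sym !subr_eq -!addrA addrC -!addrA.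
Qed.

Lemma tr_A2 (R : realType) (t s : R[i]) : \tr (A2 t s) = 0.
Proof. by rewrite tr_mx2 !mxE /= subrr. Qed.

Lemma det_A2 (R : realType) (t s : R[i]) : s != 0 -> \det (A2 t s) = -1.
Proof. by move=> s_neq0; rewrite det_mx2 !mxE /=; field. Qed.

Lemma A2_sqr (R : realType) (t s : R[i]) : s != 0 -> A2 t s *m A2 t s = 1.
Proof. by move=> s_neq0; rewrite traceless_mx2_sqr ?tr_A2 // det_A2 // opprK. Qed.

Lemma mul_involutions_inv (T : pzRingType) (x y : T) :
  x * x = 1 -> y * y = 1 -> (x * y) * (y * x) = 1.
Proof. by move=> xx1 yy1; rewrite mulrA -(mulrA x) yy1 mulr1. Qed.

Lemma expr_add_inv_rec (T : pzRingType) (p q : T) :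
  p * q = 1 -> q * p = 1 -> forall n,
  p ^+ n.+2 + q ^+ n.+2 = (p + q) * (p ^+ n.+1 + q ^+ n.+1) - (p ^+ n + q ^+ n).
Proof.
move=> pq1 qp1 n.
have pqS : p * q ^+ n.+1 = q ^+ n by rewrite exprS mulrA pq1 mul1r.
have qpS : q * p ^+ n.+1 = p ^+ n by rewrite exprS mulrA qp1 mul1r.
rewrite mulrDl !mulrDr pqS qpS -!exprS.
by rewrite (addrC (p ^+ n)) addrACA (addrC (q ^+ n)) addrK.
Qed.

Theorem mainTheorem8 (R : realType) (t1 s1 t2 s2 : R[i]) :
  t1 != 0 -> s1 != 0 -> t2 != 0 -> s2 != 0 ->
  t1 != t2 -> s1 != s2 ->
  let X1 := A2 t1 s1 in
  let X2 := A2 t2 s2 in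
  let e := eps0 X1 X2 in
  [/\ frakX X1 X2 1 = e%:M,
      frakX X1 X2 2 = (e ^+ 2 - 2)%:M &
      forall n : nat, (3 <= n)%N ->
        frakX X1 X2 n = e *: frakX X1 X2 n.-1 - frakX X1 X2 n.-2].
Proof.
move=> _ s1_neq0 _ s2_neq0 _ _ X1 X2 e.
have sum_e : X1 *m X2 + X2 *m X1 = e%:M by apply: traceless_mx2_anticomm; apply: tr_A2.
have X1X1 : X1 * X1 = 1 := A2_sqr t1 s1_neq0.
have X2X2 : X2 * X2 = 1 := A2_sqr t2 s2_neq0.
have rec := expr_add_inv_rec (mul_involutions_inv X1X1 X2X2)
                             (mul_involutions_inv X2X2 X1X1).
rewrite /frakX; split.
- by rewrite !expr1.
- rewrite rec !expr1 !expr0 sum_e [_ * _]mul_scalar_mx scale_scalar_mx -expr2.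
  by rewrite raddfB raddfMn /= rmorph1.
- by case=> [|[|n]] // _; rewrite rec sum_e [_ * _]mul_scalar_mx.
Qed.
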